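(* Suppose the index set $\{1,\dots,q\}$ is partitioned into disjoint nonempty cliques $V_1,\dots,V_J$ with $v_g=|V_g|$, and let $\tilde\beta$ be a minimizer over $b\in\mathbb R^q$ of $$G(b;\lambda_2)=\frac1{2n}\|y-Xb\|^2+\frac12\lambda_2\sum_{g=1}^J b_g'(I_{v_g}-v_g^{-1}\mathbf 1_g\mathbf 1_g')b_g,$$ where $\lambda_2\ge0$, $b_g=(b_j)_{j\in V_g}$ and $\mathbf 1_g$ is the all-ones vector of length $v_g$. Let $\bar\beta_g=v_g^{-1}\sum_{j\in V_g}\tilde\beta_j$. Then (i) for any $1\le g\le J$ and $j,k\in V_g$: $\lambda_2|\tilde\beta_j-\tilde\beta_k|\le\frac1n\|x_j-x_k\|\,\|y\|$; (ii) for any $g\neq h$, $j\in V_g$, $k\in V_h$: $\lambda_2|\tilde\beta_j-\bar\beta_g-(\tilde\beta_k-\bar\beta_h)|\le\frac1n\|x_j-x_k\|\,\|y\|$.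
   Context: $y\in\mathbb R^n$, $X=(x_1,\dots,x_q)\in\mathbb R^{n\times q}$ a real design matrix. The penalty is the quadratic form of the normalized Laplacian $L=I_q-A$ with block-diagonal $A=\operatorname{diag}(A_1,\dots,A_J)$, $A_g=v_g^{-1}\mathbf 1_g\mathbf 1_g'$ (after ordering indices by cliques). *)

From HB Require Import structures.
From mathcomp Require Import all_boot all_order all_algebra.
Set Implicit Arguments. Unset Strict Implicit. Unset Printing Implicit Defensive.
Import Order.TTheory GRing.Theory Num.Theory.
Local Open Scope ring_scope.

Definition vnorm (R : rcfType) (n : nat) (v : 'cV[R]_n) : R :=
  Num.sqrt (\sum_(i < n) v i 0 ^+ 2).

(* The cliques are given by a labelling cl : 'I_q -> 'I_J ; V_g = {j | cl j = g}. *)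
Definition clique_size (q J : nat) (cl : 'I_q -> 'I_J) (g : 'I_J) : nat :=
  #|[set j | cl j == g]|.

Definition cliqueA (R : rcfType) (q J : nat) (cl : 'I_q -> 'I_J) : 'M[R]_q :=
  \matrix_(j < q, k < q)
    (if cl j == cl k then ((clique_size cl (cl j))%:R)^-1 else 0).

Definition cliqueL (R : rcfType) (q J : nat) (cl : 'I_q -> 'I_J) : 'M[R]_q :=
  1%:M - cliqueA R cl.

Definition objG (R : rcfType) (n q J : nat) (cl : 'I_q -> 'I_J)
    (y : 'cV[R]_n) (X : 'M[R]_(n, q)) (lambda2 : R) (b : 'cV[R]_q) : R :=
  (2 * n%:R)^-1 * vnorm (y - X *m b) ^+ 2
  + 2^-1 * lambda2 * (b^T *m cliqueL R cl *m b) 0 0.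

Definition clique_mean (R : rcfType) (q J : nat) (cl : 'I_q -> 'I_J)
    (beta : 'cV[R]_q) (g : 'I_J) : R :=
  ((clique_size cl g)%:R)^-1 * \sum_(j < q | cl j == g) beta j 0.

From HB Require Import structures.
From mathcomp Require Import all_boot all_order all_algebra.
From mathcomp Require Import ring lra.
Import Order.TTheory GRing.Theory Num.Theory.
Set Implicit Arguments. Unset Strict Implicit. Unset Printing Implicit Defensive.
Local Open Scope ring_scope.

(* The objective is an instance of penalized least squares
     P(b) = 1/(2n) ||y - X b||^2 + 1/2 lambda b' M b
   with a symmetric positive semidefinite penalty matrix M.  For such a problem
   and any minimizer beta:
   - along every direction d the map t |-> P(beta + t d) is a quadratic in t
     minimized at t = 0, so its linear coefficient vanishes (stationarity):
       lambda <d, M beta> = 1/n <X d, y - X beta>;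
   - comparing with b = 0 and using b' M b >= 0 gives ||y - X beta|| <= ||y||;
   - Cauchy-Schwarz then yields lambda |<d, M beta>| <= 1/n ||X d|| ||y||.
   For the clique Laplacian L = I - A one computes (L b)_j = b_j - mean_{cl j} b,
   L is symmetric and positive semidefinite (b' L b is the within-clique sum of
   squares), and with d = e_j - e_k the general bound becomes claim (ii);
   claim (i) is the special case of a common clique, where the means cancel. *)

Section InnerProduct.
Variable R : rcfType.

Definition dot (m : nat) (u v : 'cV[R]_m) : R := (u^T *m v) 0 0.

Lemma dotE m (u v : 'cV[R]_m) : dot u v = \sum_(i < m) u i 0 * v i 0.
Proof. by rewrite /dot mxE; apply: eq_bigr => i _; rewrite mxE. Qed.

Lemma dotC m (u v : 'cV[R]_m) : dot u v = dot v u.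
Proof. by rewrite !dotE; apply: eq_bigr => i _; rewrite mulrC. Qed.

Lemma dot_ge0 m (u : 'cV[R]_m) : 0 <= dot u u.
Proof. by rewrite dotE; apply: sumr_ge0 => i _; rewrite -expr2 sqr_ge0. Qed.

Lemma dotDl m (u v w : 'cV[R]_m) : dot (u + v) w = dot u w + dot v w.
Proof. by rewrite /dot linearD mulmxDl mxE. Qed.

Lemma dotZl m (a : R) (u w : 'cV[R]_m) : dot (a *: u) w = a * dot u w.
Proof. by rewrite /dot linearZ -scalemxAl mxE. Qed.

Lemma dotNl m (u w : 'cV[R]_m) : dot (- u) w = - dot u w.
Proof. by rewrite -scaleN1r dotZl mulN1r. Qed.

Lemma dotDr m (u v w : 'cV[R]_m) : dot w (u + v) = dot w u + dot w v.
Proof. by rewrite dotC dotDl !(dotC w). Qed.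

Lemma dotZr m (a : R) (u w : 'cV[R]_m) : dot w (a *: u) = a * dot w u.
Proof. by rewrite dotC dotZl dotC. Qed.

Lemma dotNr m (u w : 'cV[R]_m) : dot w (- u) = - dot w u.
Proof. by rewrite dotC dotNl dotC. Qed.

Lemma dot_mulmx m (M : 'M[R]_m) (u v : 'cV[R]_m) :
  dot u (M *m v) = dot (M^T *m u) v.
Proof. by rewrite /dot trmx_mul trmxK mulmxA. Qed.

Lemma dot_delta m (i : 'I_m) (v : 'cV[R]_m) : dot (delta_mx i 0) v = v i 0.
Proof. by rewrite /dot trmx_delta -rowE mxE. Qed.

Lemma vnorm_ge0 m (u : 'cV[R]_m) : 0 <= vnorm u.
Proof. exact: sqrtr_ge0. Qed.

Lemma vnorm_sqr m (u : 'cV[R]_m) : vnorm u ^+ 2 = dot u u.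
Proof.
rewrite /vnorm sqr_sqrtr; last by apply: sumr_ge0 => i _; rewrite sqr_ge0.
by rewrite dotE; apply: eq_bigr => i _; rewrite expr2.
Qed.

Lemma quadratic_discriminant (a b c : R) : 0 <= c ->
  (forall t, 0 <= a - 2 * t * b + t ^+ 2 * c) -> b ^+ 2 <= a * c.
Proof.
move=> c_ge0 nonneg; have [c0|c_neq0] := eqVneq c 0.
  rewrite c0 mulr0; have [b0|b_neq0] := eqVneq b 0; first by rewrite b0 expr0n.
  have := nonneg ((a + 1) / (2 * b)); rewrite c0 mulr0 addr0.
  have -> : a - 2 * ((a + 1) / (2 * b)) * b = - 1 by field.
  by rewrite oppr_ge0 ler10.
have c_gt0 : 0 < c by rewrite lt_def c_neq0 c_ge0.
have := nonneg (b / c).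
have -> : a - 2 * (b / c) * b + (b / c) ^+ 2 * c = (a * c - b ^+ 2) / c by field.
by rewrite pmulr_lge0 ?invr_gt0 // subr_ge0.
Qed.

Lemma cauchy_schwarz m (u v : 'cV[R]_m) : `|dot u v| <= vnorm u * vnorm v.
Proof.
rewrite -(ler_pXn2r (n := 2)) ?nnegrE ?mulr_ge0 ?vnorm_ge0 //.
rewrite real_normK ?num_real // exprMn !vnorm_sqr.
apply: quadratic_discriminant; first exact: dot_ge0.
move=> t; have := dot_ge0 (u - t *: v).
by rewrite !(dotDl, dotDr, dotNl, dotNr, dotZl, dotZr) (dotC v u); lra.
Qed.

Lemma quadratic_min_at0 (a c : R) : (forall t, 0 <= c * t + a * t ^+ 2) -> c = 0.
Proof.
move=> nonneg; pose s := `|a| + 1.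
have s_gt0 : 0 < s by rewrite ltr_wpDl.
have a_le_s : a - s < 0 by rewrite subr_lt0 /s ltr_pwDr // ler_norm.
have := nonneg (- c / s).
have -> : c * (- c / s) + a * (- c / s) ^+ 2 = c ^+ 2 * (a - s) / s ^+ 2.
  by field; rewrite gt_eqF.
rewrite pmulr_lge0 ?invr_gt0 ?exprn_gt0 // => h.
by apply/eqP; rewrite -sqrf_eq0 eq_le sqr_ge0 andbT; nra.
Qed.

End InnerProduct.

Definition penLS (R : rcfType) (n q : nat) (M : 'M[R]_q)
    (y : 'cV[R]_n) (X : 'M[R]_(n, q)) (lambda : R) (b : 'cV[R]_q) : R :=
  (2 * n%:R)^-1 * vnorm (y - X *m b) ^+ 2 + 2^-1 * lambda * (b^T *m M *m b) 0 0.

Lemma qformE (R : rcfType) q (M : 'M[R]_q) (b : 'cV[R]_q) :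
  (b^T *m M *m b) 0 0 = dot b (M *m b).
Proof. by rewrite /dot mulmxA. Qed.

Section PenalizedLeastSquares.
Variables (R : rcfType) (n q : nat) (M : 'M[R]_q).
Variables (y : 'cV[R]_n) (X : 'M[R]_(n, q)) (lambda : R).
Hypothesis n_gt0 : (0 < n)%N.
Hypothesis M_sym : M^T = M.

Let P := penLS M y X lambda.

Lemma dot_sym_form (b d : 'cV[R]_q) : dot b (M *m d) = dot d (M *m b).
Proof. by rewrite dot_mulmx M_sym dotC. Qed.

Lemma penLS_line (b d : 'cV[R]_q) (t : R) :
  P (b + t *: d) = P b
    + (lambda * dot d (M *m b) - n%:R^-1 * dot (X *m d) (y - X *m b)) * t
    + ((2 * n%:R)^-1 * dot (X *m d) (X *m d) + 2^-1 * lambda * dot d (M *m d))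
      * t ^+ 2.
Proof.
rewrite /P /penLS !vnorm_sqr !qformE !mulmxDr -!scalemxAr.
have -> : y - (X *m b + t *: (X *m d)) = (y - X *m b) - t *: (X *m d).
  by rewrite opprD addrA.
rewrite !(dotDl, dotDr, dotNl, dotNr, dotZl, dotZr).
rewrite (dotC y (X *m d)) (dotC (X *m b) (X *m d)) (dot_sym_form b d) invfM.
by field; rewrite pnatr_eq0 -lt0n.
Qed.

Lemma penLS_stationary (beta d : 'cV[R]_q) :
  (forall b, P beta <= P b) ->
  lambda * dot d (M *m beta) = n%:R^-1 * dot (X *m d) (y - X *m beta).
Proof.
move=> beta_min; apply/eqP; rewrite -subr_eq0; apply/eqP.
apply: quadratic_min_at0 => t.
by move: (beta_min (beta + t *: d)); rewrite penLS_line -addrA lerDl; apply.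
Qed.

Hypothesis M_psd : forall b : 'cV[R]_q, 0 <= dot b (M *m b).
Hypothesis lambda_ge0 : 0 <= lambda.

(* Comparing a minimizer with b = 0: the residual is no longer than y. *)
Lemma penLS_residual (beta : 'cV[R]_q) :
  (forall b, P beta <= P b) -> vnorm (y - X *m beta) <= vnorm y.
Proof.
move=> beta_min; rewrite -(ler_pXn2r (n := 2)) ?nnegrE ?vnorm_ge0 //.
have := beta_min 0; rewrite /P /penLS !qformE !mulmx0 subr0.
have -> : dot (0 : 'cV[R]_q) 0 = 0 by rewrite /dot mulmx0 mxE.
have penalty_ge0 : 0 <= 2^-1 * lambda * dot beta (M *m beta).
  by rewrite !mulr_ge0 ?invr_ge0 ?ler0n.
have inv_gt0 : 0 < (2 * n%:R)^-1 :> R by rewrite invr_gt0 mulr_gt0 ?ltr0n.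
rewrite mulr0 addr0 => objective_le.
by rewrite -(ler_pM2l inv_gt0); lra.
Qed.

Lemma penLS_grouping (beta d : 'cV[R]_q) :
  (forall b, P beta <= P b) ->
  lambda * `|dot d (M *m beta)| <= n%:R^-1 * vnorm (X *m d) * vnorm y.
Proof.
move=> beta_min.
rewrite -(ger0_norm lambda_ge0) -normrM penLS_stationary // normrM.
rewrite ger0_norm ?invr_ge0 ?ler0n // -mulrA ler_wpM2l ?invr_ge0 ?ler0n //.
apply: le_trans (cauchy_schwarz _ _) _.
by rewrite ler_wpM2l ?vnorm_ge0 ?penLS_residual.
Qed.

End PenalizedLeastSquares.

Section CliqueLaplacian.
Variables (R : rcfType) (q J : nat) (cl : 'I_q -> 'I_J).

Let L := cliqueL R cl.

Lemma cliqueL_sym : L^T = L.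
Proof.
apply/matrixP => i j; rewrite /L /cliqueL !mxE (eq_sym j i) (eq_sym (cl j)).
by case: (cl i =P cl j) => [->|].
Qed.

Lemma cliqueL_mulmx (b : 'cV[R]_q) (j : 'I_q) :
  (L *m b) j 0 = b j 0 - clique_mean cl b (cl j).
Proof.
rewrite /L /cliqueL mulmxBl mul1mx !mxE /clique_mean mulr_sumr.
congr (_ - _); rewrite [RHS]big_mkcond; apply: eq_bigr => k _; rewrite !mxE eq_sym.
by case: ifP => _; rewrite ?mul0r.
Qed.

Lemma cliqueL_delta (b : 'cV[R]_q) (j k : 'I_q) :
  dot (delta_mx j 0 - delta_mx k 0) (L *m b)
  = (b j 0 - clique_mean cl b (cl j)) - (b k 0 - clique_mean cl b (cl k)).
Proof. by rewrite dotDl dotNl !dot_delta !cliqueL_mulmx. Qed.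

Hypothesis cl_surj : forall g : 'I_J, exists j : 'I_q, cl j = g.

Lemma clique_deviation_sum (b : 'cV[R]_q) (g : 'I_J) :
  \sum_(i < q | cl i == g) (b i 0 - clique_mean cl b g) = 0.
Proof.
have size_neq0 : (clique_size cl g)%:R != 0 :> R.
  rewrite pnatr_eq0 -lt0n; apply/card_gt0P.
  by have [j cl_j] := cl_surj g; exists j; rewrite inE cl_j.
rewrite sumrB sumr_const /clique_mean -[X in _ - X]mulr_natr.
rewrite -cardsE -/(clique_size cl g).
by rewrite mulrAC mulVf // mul1r subrr.
Qed.

(* b' L b is the within-clique sum of squared deviations, hence nonnegative. *)
Lemma cliqueL_psd (b : 'cV[R]_q) : 0 <= dot b (L *m b).
Proof.
pose m := clique_mean cl b.
have split_sum : dot b (L *m b) = \sum_(i < q) (b i 0 - m (cl i)) ^+ 2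
    + \sum_(i < q) m (cl i) * (b i 0 - m (cl i)).
  rewrite dotE -big_split /=; apply: eq_bigr => i _.
  by rewrite cliqueL_mulmx /m; ring.
have cross_term : \sum_(i < q) m (cl i) * (b i 0 - m (cl i)) = 0.
  rewrite (partition_big cl predT) //=; apply: big1 => g _.
  rewrite (eq_bigr (fun i => m g * (b i 0 - m g))) => [|i /eqP -> //].
  by rewrite -mulr_sumr clique_deviation_sum mulr0.
by rewrite split_sum cross_term addr0; apply: sumr_ge0 => i _; exact: sqr_ge0.
Qed.

End CliqueLaplacian.

Theorem proposition2 (R : rcfType) (n q J : nat) (hn : (0 < n)%N)
    (y : 'cV[R]_n) (X : 'M[R]_(n, q)) (cl : 'I_q -> 'I_J)
    (hne : forall g : 'I_J, exists j : 'I_q, cl j = g)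
    (lambda2 : R) (hl : 0 <= lambda2) (beta : 'cV[R]_q)
    (hmin : forall b : 'cV[R]_q, objG cl y X lambda2 beta <= objG cl y X lambda2 b) :
  (forall j k : 'I_q, cl j = cl k ->
     lambda2 * `|beta j 0 - beta k 0|
       <= n%:R^-1 * vnorm (col j X - col k X) * vnorm y)
  /\
  (forall j k : 'I_q, cl j <> cl k ->
     lambda2 * `|beta j 0 - clique_mean cl beta (cl j)
                 - (beta k 0 - clique_mean cl beta (cl k))|
       <= n%:R^-1 * vnorm (col j X - col k X) * vnorm y).
Proof.
have grouping (j k : 'I_q) :
    lambda2 * `|beta j 0 - clique_mean cl beta (cl j)
                - (beta k 0 - clique_mean cl beta (cl k))|
      <= n%:R^-1 * vnorm (col j X - col k X) * vnorm y.
  have := penLS_grouping hn (cliqueL_sym R cl) (cliqueL_psd hne) hl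
            (delta_mx j 0 - delta_mx k 0) hmin.
  by rewrite cliqueL_delta mulmxBr -!colE.
split => [j k same_clique | j k _]; last exact: grouping.
(* Within one clique the two means coincide and cancel. *)
by have := grouping j k; rewrite same_clique (addrC (beta k 0)) addrKA.
Qed.
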